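(* Let $p,l$ be distinct odd primes and let $\Gamma$, $\Gamma_p$, $\ell$, $n(\cdot)$ be as in the context. Let $a=\psi(x)\in\Gamma_p\setminus\{1\}$ with $x\in\tilde\Gamma$, and let $n=n(x)$. The following are equivalent: (a) $p\nmid n$; (b) $\ell(a^2)=2\ell(a)$; (c) $\left(\frac{-n}{p}\right)=1$. Similarly, for $b=\psi(y)\in\Gamma_l\setminus\{1\}$ with $y\in\tilde\Gamma$ and $n=n(y)$, the following are equivalent: $l\nmid n$; $\ell(b^2)=2\ell(b)$; $\left(\frac{-n}{l}\right)=1$.
   Context: Let $p,l$ be distinct odd primes. Let $\mathbb H(\mathbb Z)$ be the ring of quaternions $x=x_0+x_1i+x_2j+x_3k$ with $x_0,\dots,x_3\in\mathbb Z$, where $i^2=j^2=k^2=-1$, $ij=-ji=k$; write $|x|^2=x_0^2+x_1^2+x_2^2+x_3^2$. Fix $c_p,d_p\in\mathbb Q_p$ with $c_p^2+d_p^2+1=0$ and $c_l,d_l\in\mathbb Q_l$ with $c_l^2+d_l^2+1=0$. Define $\psi:\mathbb H(\mathbb Z)\setminus\{0\}\to G:=PGL_2(\mathbb Q_p)\times PGL_2(\mathbb Q_l)$ by sending $x$ to the class of the pair $\left(\begin{pmatrix} x_0+x_1c_p+x_3d_p & -x_1d_p+x_2+x_3c_p\\ -x_1d_p-x_2+x_3c_p & x_0-x_1c_p-x_3d_p\end{pmatrix},\begin{pmatrix} x_0+x_1c_l+x_3d_l & -x_1d_l+x_2+x_3c_l\\ -x_1d_l-x_2+x_3c_l & x_0-x_1c_l-x_3d_l\end{pmatrix}\right)$.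 Let $\tilde\Gamma$ be the set of $x\in\mathbb H(\mathbb Z)$ such that $|x|^2=p^rl^s$ for some integers $r,s\ge 0$, and such that $x_0$ is odd and $x_1,x_2,x_3$ are even if $|x|^2\equiv 1\pmod 4$, while $x_1$ is even and $x_0,x_2,x_3$ are odd if $|x|^2\equiv 3\pmod 4$. Then $\Gamma=\psi(\tilde\Gamma)$ is a torsion-free lattice in $G$. Let $\tilde A=\{x\in\tilde\Gamma: x_0>0,\ |x|^2=p\}$, $\tilde B=\{y\in\tilde\Gamma: y_0>0,\ |y|^2=l\}$; $\Gamma_p=\langle\psi(\tilde A)\rangle$ and $\Gamma_l=\langle\psi(\tilde B)\rangle$ are free, and $\psi(\tilde A)\cup\psi(\tilde B)$ generates $\Gamma$. For $\gamma\in\Gamma$, $\ell(\gamma)$ is the word length of $\gamma$ with respect to the generating set $\psi(\tilde A)\cup\psi(\tilde B)$. Any $x\in\tilde\Gamma$ with $\psi(x)\ne 1$ can be written $x=x_0+z_0(c_1i+c_2j+c_3k)$ with $z_0\in\mathbb Z\setminus\{0\}$ and $c_1,c_2,c_3\in\mathbb Z$ relatively prime; set $n(x)=c_1^2+c_2^2+c_3^2$. For a prime $q$, $\left(\frac{m}{q}\right)$ is the Legendre symbol (equal to $0$ if $q\mid m$). *)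

From HB Require Import structures.
From mathcomp Require Import all_boot all_order all_algebra.
From Stdlib Require Import ClassicalEpsilon.
Set Implicit Arguments. Unset Strict Implicit. Unset Printing Implicit Defensive.
Import Order.TTheory GRing.Theory Num.Theory.
Local Open Scope ring_scope.

(* Integer quaternions x = x0 + x1 i + x2 j + x3 k. *)
Record quat := Quat { q0 : int; q1 : int; q2 : int; q3 : int }.

Definition qnorm2 (x : quat) : int :=
  q0 x ^+ 2 + q1 x ^+ 2 + q2 x ^+ 2 + q3 x ^+ 2.

Definition zodd (z : int) : bool := ~~ (2 %| z)%Z.

Definition in_Gtilde (p l : nat) (x : quat) : Prop :=
  (exists r s : nat, qnorm2 x = ((p ^ r * l ^ s)%N)%:Z) /\
  (((qnorm2 x %% 4)%Z = 1 ->
      [/\ zodd (q0 x), ~~ zodd (q1 x), ~~ zodd (q2 x) & ~~ zodd (q3 x)]) /\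
   ((qnorm2 x %% 4)%Z = 3 ->
      [/\ ~~ zodd (q1 x), zodd (q0 x), zodd (q2 x) & zodd (q3 x)])).

(* the matrix component of psi over a field F with c^2+d^2+1 = 0 *)
Definition psi_mat (F : fieldType) (c d : F) (x : quat) : 'M[F]_2 :=
  let x0 : F := (q0 x)%:~R in let x1 : F := (q1 x)%:~R in
  let x2 : F := (q2 x)%:~R in let x3 : F := (q3 x)%:~R in
  \matrix_(i < 2, j < 2)
    (if (i == 0%N :> nat) && (j == 0%N :> nat) then x0 + x1 * c + x3 * d
     else if (i == 0%N :> nat) then - (x1 * d) + x2 + x3 * c
     else if (j == 0%N :> nat) then - (x1 * d) - x2 + x3 * c
     else x0 - x1 * c - x3 * d).

(* representatives of elements of G = PGL_2(F_p) x PGL_2(F_l) *)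
Definition Gpair (Fp Fl : fieldType) := ('M[Fp]_2 * 'M[Fl]_2)%type.

Definition gmul (Fp Fl : fieldType) (A B : Gpair Fp Fl) : Gpair Fp Fl :=
  (A.1 *m B.1, A.2 *m B.2).
Definition ginv (Fp Fl : fieldType) (A : Gpair Fp Fl) : Gpair Fp Fl :=
  (invmx A.1, invmx A.2).
Definition gone (Fp Fl : fieldType) : Gpair Fp Fl := (1%:M, 1%:M).

(* equality in PGL_2 x PGL_2: equality up to (independent) nonzero scalars *)
Definition pgl_eq (Fp Fl : fieldType) (A B : Gpair Fp Fl) : Prop :=
  exists (lp : Fp) (ll : Fl), lp != 0 /\ ll != 0 /\
    B.1 = lp *: A.1 /\ B.2 = ll *: A.2.

Definition psi (Fp Fl : fieldType) (cp dp : Fp) (cl dl : Fl) (x : quat)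
  : Gpair Fp Fl := (psi_mat cp dp x, psi_mat cl dl x).

Definition word_val (Fp Fl : fieldType) (cp dp : Fp) (cl dl : Fl)
  (w : seq (bool * quat)) : Gpair Fp Fl :=
  foldr (fun bs acc =>
           gmul (if bs.1 then psi cp dp cl dl bs.2
                 else ginv (psi cp dp cl dl bs.2)) acc)
        (gone Fp Fl) w.

(* \tilde A (q = p) and \tilde B (q = l) *)
Definition in_tildeAB (p l q : nat) (x : quat) : Prop :=
  in_Gtilde p l x /\ 0 < q0 x /\ qnorm2 x = q%:Z.

Definition gen_letter (p l : nat) (s : quat) : Prop :=
  in_tildeAB p l p s \/ in_tildeAB p l l s.

Definition is_word_length (Fp Fl : fieldType) (cp dp : Fp) (cl dl : Fl)
  (p l : nat) (g : Gpair Fp Fl) (k : nat) : Prop :=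
  (exists w, size w = k /\ (forall bs, List.In bs w -> gen_letter p l bs.2)
             /\ pgl_eq (word_val cp dp cl dl w) g) /\
  (forall w, (forall bs, List.In bs w -> gen_letter p l bs.2) ->
             pgl_eq (word_val cp dp cl dl w) g -> (k <= size w)%N).

Definition ell (Fp Fl : fieldType) (cp dp : Fp) (cl dl : Fl)
  (p l : nat) (g : Gpair Fp Fl) : nat :=
  epsilon (inhabits 0%N) (is_word_length cp dp cl dl p l g).

Definition in_Gamma_q (Fp Fl : fieldType) (cp dp : Fp) (cl dl : Fl)
  (p l q : nat) (g : Gpair Fp Fl) : Prop :=
  exists w, (forall bs, List.In bs w -> in_tildeAB p l q bs.2) /\
            pgl_eq (word_val cp dp cl dl w) g.

Definition legendre (m : int) (q : nat) : int :=
  if (q%:Z %| m)%Z then 0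
  else if [exists y : 'I_q, (q%:Z %| (y%:Z) ^+ 2 - m)%Z] then 1 else -1.

(* Every element of Gamma_q is psi of the product [R] of a reduced word in the
   generators of norm [q] (no letter followed by its conjugate).  Unique
   factorisation of integer quaternions of norm [q] modulo [q] shows that [q]
   does not divide [R]; comparing [q]-adic valuations of norms then shows that
   no word in all the generators is shorter, so the word length of psi(R) is
   the length of the reduced word.  Hence l(a^2) = 2 l(a) iff the doubled word
   is reduced iff [q] does not divide [R^2].  Writing
   [R = R0 + z (c1 i + c2 j + c3 k)] with [|R|^2 = q^m], one has
   [R^2 = R0^2 - z^2 n + 2 R0 z (c1 i + c2 j + c3 k)], which is divisible by [q]
   iff [n] is; and when [q] does not divide [n], [R0^2 + z^2 n = 0 (mod q)] with
   [q] not dividing [z] exhibits [-n] as a square modulo [q]. *)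

From HB Require Import structures.
From mathcomp Require Import all_boot all_order all_algebra.
From mathcomp Require Import ring zify.
From Stdlib Require Import Classical ClassicalEpsilon.
Import Order.TTheory GRing.Theory Num.Theory.
Local Open Scope ring_scope.
Set Implicit Arguments. Unset Strict Implicit. Unset Printing Implicit Defensive.

(** * Integer arithmetic *)

Section PrimeDivisibility.
Variable q : nat.
Hypothesis prime_q : prime q.

Lemma primez_neq0 : q%:Z != 0.
Proof. by rewrite eqz_nat -lt0n prime_gt0. Qed.

Lemma Euclidz_dvdM (a b : int) :
  (q%:Z %| a * b)%Z = (q%:Z %| a)%Z || (q%:Z %| b)%Z.
Proof. by rewrite !dvdzE abszM Euclid_dvdM. Qed.

Lemma Euclidz_dvdX (a : int) (k : nat) : (0 < k)%N ->
  (q%:Z %| a ^+ k)%Z = (q%:Z %| a)%Z.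
Proof. by move=> k_gt0; rewrite !dvdzE abszX Euclid_dvdX // k_gt0 andbT. Qed.

Lemma primez_ndvd1 : ~~ (q%:Z %| 1%R)%Z.
Proof. by rewrite dvdzE /= Euclid_dvd1. Qed.

Lemma odd_primez_ndvd2 : odd q -> ~~ (q%:Z %| 2)%Z.
Proof.
move=> odd_q; rewrite dvdzE /=; apply/negP => /(dvdn_leq (isT : 0 < 2)%N).
by case: q prime_q odd_q => [|[|[|]]].
Qed.

End PrimeDivisibility.

Lemma dvdz_coprime3 (d a c1 c2 c3 : int) : gcdz (gcdz c1 c2) c3 = 1 ->
  (d %| a * c1)%Z -> (d %| a * c2)%Z -> (d %| a * c3)%Z -> (d %| a)%Z.
Proof.
move=> g1 d1 d2 d3.
have [u [v e12]] := Bezoutz c1 c2.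
have [u' [v' e]] := Bezoutz (gcdz c1 c2) c3.
rewrite g1 -e12 in e.
have -> : a = (u' * u) * (a * c1) + (u' * v) * (a * c2) + v' * (a * c3).
  by rewrite -[LHS]mulr1 -e; ring.
by rewrite !rpredD // dvdz_mull.
Qed.

Lemma primitive_multiple (z w c1 c2 c3 a1 a2 a3 : int) :
  gcdz (gcdz c1 c2) c3 = 1 -> z != 0 ->
  z * a1 = w * c1 -> z * a2 = w * c2 -> z * a3 = w * c3 ->
  exists k, [/\ a1 = k * c1, a2 = k * c2 & a3 = k * c3].
Proof.
move=> g1 z_neq0 e1 e2 e3.
have /dvdzP[k w_eq] : (z %| w)%Z.
  by apply: (dvdz_coprime3 g1); rewrite -?e1 -?e2 -?e3 dvdz_mulr.
by exists k; split; apply: (mulfI z_neq0); rewrite ?e1 ?e2 ?e3 w_eq; ring.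
Qed.

Lemma legendre_eq1P (m : int) (q : nat) : prime q ->
  legendre m q = 1 <-> ~~ (q%:Z %| m)%Z /\ exists y : int, (q%:Z %| y ^+ 2 - m)%Z.
Proof.
move=> prime_q; rewrite /legendre.
case: ifP => _; first by split=> // -[].
case: ifP => [/existsP[y qy] | /existsP ny]; first by split=> //; split=> //; exists y.
split=> // -[_ [y qy]]; case: ny.
have yq_ge0 : 0 <= (y %% q)%Z by rewrite modz_ge0 // primez_neq0.
have yq_lt : (`|(y %% q)%Z| < q)%N.
  by rewrite -ltz_nat gez0_abs // ltz_pmod // ltz_nat prime_gt0.
exists (Ordinal yq_lt); rewrite /= gez0_abs //.
have /eqP : ((y %% q)%Z = y %[mod q])%Z by rewrite modz_mod.
rewrite eqz_mod_dvd => /dvdzP[k ek].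
have -> : (y %% q)%Z ^+ 2 - m = (y ^+ 2 - m) + ((y %% q)%Z - y) * ((y %% q)%Z + y) by ring.
by rewrite ek rpredD // dvdz_mulr // dvdz_mull.
Qed.

Section SquareRoots.
Variable q : nat.
Hypothesis prime_q : prime q.

Lemma sum_sqr_ndvdz (a z n : int) : (q%:Z %| a ^+ 2 + z ^+ 2 * n)%Z ->
  ~~ ((q%:Z %| a)%Z && (q%:Z %| z)%Z) -> ~~ (q%:Z %| z)%Z.
Proof.
move=> qN; apply: contra => qz; rewrite qz andbT -(Euclidz_dvdX prime_q a (isT : 0 < 2)%N).
by rewrite -[a ^+ 2](addrK (z ^+ 2 * n)) rpredB // dvdz_mulr // Euclidz_dvdX.
Qed.

Lemma neg_sqr_mod (a z n : int) : (q%:Z %| a ^+ 2 + z ^+ 2 * n)%Z ->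
  ~~ ((q%:Z %| a)%Z && (q%:Z %| z)%Z) -> exists y : int, (q%:Z %| y ^+ 2 - - n)%Z.
Proof.
move=> qN nboth; have nqz := sum_sqr_ndvdz qN nboth.
have cop : coprimez z q%:Z by rewrite coprimezE /= coprime_sym prime_coprime // -dvdzE.
have [u [v uv]] := Bezoutz z q%:Z; rewrite (eqP cop) in uv.
exists (a * u).
have zy_eq : z ^+ 2 * ((a * u) ^+ 2 - - n) =
             v * q%:Z * (- a ^+ 2 * (u * z + 1)) + (a ^+ 2 + z ^+ 2 * n).
  have -> : v * q%:Z = 1 - u * z by rewrite -uv; ring.
  by ring.
have : (q%:Z %| z ^+ 2 * ((a * u) ^+ 2 - - n))%Z.
  by rewrite zy_eq rpredD // -mulrA dvdz_mull // dvdz_mulr.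
by rewrite Euclidz_dvdM // Euclidz_dvdX // (negbTE nqz).
Qed.

Lemma dvdz_sum_sqr (a z n : int) : (q%:Z %| a ^+ 2 + z ^+ 2 * n)%Z ->
  ~~ ((q%:Z %| a)%Z && (q%:Z %| z)%Z) ->
  (q%:Z %| n)%Z = (q%:Z %| a ^+ 2 - z ^+ 2 * n)%Z && (q%:Z %| a * z)%Z.
Proof.
move=> qN nboth; have nqz := sum_sqr_ndvdz qN nboth.
have sqr (b : int) : (q%:Z %| b ^+ 2)%Z = (q%:Z %| b)%Z by rewrite Euclidz_dvdX.
have qa_n : (q%:Z %| a)%Z = (q%:Z %| n)%Z.
  rewrite -sqr -[RHS]orFb -(negbTE nqz) -sqr -Euclidz_dvdM //.
  apply/idP/idP => h.
    by rewrite -[z ^+ 2 * n](addKr (a ^+ 2)) rpredD ?rpredN.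
  by rewrite -[a ^+ 2](addrK (z ^+ 2 * n)) rpredB.
rewrite [(_ %| a * z)%Z]Euclidz_dvdM // (negbTE nqz) orbF -qa_n.
have [qa | _] := boolP (q%:Z %| a)%Z; rewrite ?andbF // andbT.
by apply/esym; rewrite rpredB ?sqr // dvdz_mull // -qa_n.
Qed.

End SquareRoots.

(** * Integer quaternions *)

Definition qmul (a b : quat) : quat :=
  Quat (q0 a * q0 b - q1 a * q1 b - q2 a * q2 b - q3 a * q3 b)
       (q0 a * q1 b + q1 a * q0 b + q2 a * q3 b - q3 a * q2 b)
       (q0 a * q2 b - q1 a * q3 b + q2 a * q0 b + q3 a * q1 b)
       (q0 a * q3 b + q1 a * q2 b - q2 a * q1 b + q3 a * q0 b).
Definition qadd (a b : quat) : quat :=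
  Quat (q0 a + q0 b) (q1 a + q1 b) (q2 a + q2 b) (q3 a + q3 b).
Definition qconj (a : quat) : quat := Quat (q0 a) (- q1 a) (- q2 a) (- q3 a).
Definition qscale (k : int) (a : quat) : quat :=
  Quat (k * q0 a) (k * q1 a) (k * q2 a) (k * q3 a).
Definition qconst (k : int) : quat := Quat k 0 0 0.
Definition qone : quat := qconst 1.

Lemma quat_eta (a : quat) : a = Quat (q0 a) (q1 a) (q2 a) (q3 a).
Proof. by case: a. Qed.

Ltac quat_ring :=
  rewrite /qmul /qadd /qconj /qscale /qone /qconst /qnorm2 /=; congr Quat; ring.

Lemma qmulA a b c : qmul a (qmul b c) = qmul (qmul a b) c.
Proof. quat_ring. Qed.
Lemma qmul1q a : qmul qone a = a.
Proof. by rewrite [RHS]quat_eta; quat_ring. Qed.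
Lemma qmulq1 a : qmul a qone = a.
Proof. by rewrite [RHS]quat_eta; quat_ring. Qed.
Lemma qmul_addr a b c : qmul a (qadd b c) = qadd (qmul a b) (qmul a c).
Proof. quat_ring. Qed.
Lemma qmul_conjr a : qmul a (qconj a) = qconst (qnorm2 a).
Proof. quat_ring. Qed.
Lemma qmul_conjl a : qmul (qconj a) a = qconst (qnorm2 a).
Proof. quat_ring. Qed.
Lemma qmul_constl k a : qmul (qconst k) a = qscale k a.
Proof. quat_ring. Qed.
Lemma qmul_constr k a : qmul a (qconst k) = qscale k a.
Proof. quat_ring. Qed.
Lemma qmul_scaler k a b : qmul a (qscale k b) = qscale k (qmul a b).
Proof. quat_ring. Qed.
Lemma qscaleA k m a : qscale k (qscale m a) = qscale (k * m) a.
Proof. quat_ring. Qed.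
Lemma qscale1 a : qscale 1 a = a.
Proof. by rewrite [RHS]quat_eta; quat_ring. Qed.
Lemma qnorm2M a b : qnorm2 (qmul a b) = qnorm2 a * qnorm2 b.
Proof. rewrite /qnorm2 /qmul /=; ring. Qed.
Lemma qnorm2_conj a : qnorm2 (qconj a) = qnorm2 a.
Proof. rewrite /qnorm2 /qconj /=; ring. Qed.
Lemma qnorm2_scale k a : qnorm2 (qscale k a) = k ^+ 2 * qnorm2 a.
Proof. rewrite /qnorm2 /qscale /=; ring. Qed.

Lemma qmul_sandwich u x :
  qadd (qmul (qmul u x) u) (qscale (qnorm2 u) (qconj x)) =
  qscale (2 * q0 (qmul u x)) u.
Proof. quat_ring. Qed.

Lemma qscale_inj k a b : k != 0 -> qscale k a = qscale k b -> a = b.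
Proof.
move=> k_neq0 [e0 e1 e2 e3]; rewrite (quat_eta a) (quat_eta b).
by congr Quat; apply: (mulfI k_neq0).
Qed.

Lemma qnorm2_eq1 a : qnorm2 a = 1 -> exists2 e : int, e ^+ 2 = 1 &
  [\/ a = Quat e 0 0 0, a = Quat 0 e 0 0, a = Quat 0 0 e 0 | a = Quat 0 0 0 e].
Proof.
case: a => a0 a1 a2 a3; rewrite /qnorm2 /=.
have [->|a0_neq0] := eqVneq a0 0; last first.
  by move=> n1; exists a0; [nia | constructor 1; congr Quat; nia].
have [->|a1_neq0] := eqVneq a1 0; last first.
  by move=> n1; exists a1; [nia | constructor 2; congr Quat; nia].
have [->|a2_neq0] := eqVneq a2 0; last first.
  by move=> n1; exists a2; [nia | constructor 3; congr Quat; nia].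
by move=> n1; exists a3; [lia | constructor 4].
Qed.

Definition qdvd (d : int) (a : quat) : bool :=
  [&& (d %| q0 a)%Z, (d %| q1 a)%Z, (d %| q2 a)%Z & (d %| q3 a)%Z].

Lemma qdvdP d a : d != 0 -> reflect (exists b, a = qscale d b) (qdvd d a).
Proof.
move=> d_neq0; apply: (iffP idP); last by case=> b ->; rewrite /qdvd /= !dvdz_mulr.
case/and4P => /dvdzP[b0 e0] /dvdzP[b1 e1] /dvdzP[b2 e2] /dvdzP[b3 e3].
by exists (Quat b0 b1 b2 b3); rewrite (quat_eta a) e0 e1 e2 e3 /qscale /=; congr Quat; ring.
Qed.

Lemma qdvd_mulr d a b : qdvd d a -> qdvd d (qmul a b).
Proof. by case/and4P => *; rewrite /qdvd /= !rpredD ?rpredN ?dvdz_mulr. Qed.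

Lemma qdvd_add d a b : qdvd d a -> qdvd d b -> qdvd d (qadd a b).
Proof.
by case/and4P=> ? ? ? ? /and4P[? ? ? ?]; apply/and4P; split; apply: rpredD.
Qed.

Lemma qdvd_scale d k a : (d %| k)%Z -> qdvd d (qscale k a).
Proof. by move=> dk; rewrite /qdvd /= !dvdz_mulr. Qed.

Section PrimeQuaternions.
Variable q : nat.
Hypotheses (prime_q : prime q) (odd_q : odd q).

Lemma qdvd_scale_coprime k a : ~~ (q%:Z %| k)%Z -> qdvd q (qscale k a) -> qdvd q a.
Proof.
by move=> nk /and4P[]; rewrite /= !Euclidz_dvdM // (negbTE nk) => *; apply/and4P.
Qed.

Lemma exists_qre_ndvd P : ~~ qdvd q P -> exists y, ~~ (q%:Z %| q0 (qmul P y))%Z.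
Proof.
have re_1 : q0 (qmul P (Quat 1 0 0 0)) = q0 P by rewrite /qmul /=; ring.
have re_i : q0 (qmul P (Quat 0 (-1) 0 0)) = q1 P by rewrite /qmul /=; ring.
have re_j : q0 (qmul P (Quat 0 0 (-1) 0)) = q2 P by rewrite /qmul /=; ring.
have re_k : q0 (qmul P (Quat 0 0 0 (-1))) = q3 P by rewrite /qmul /=; ring.
rewrite /qdvd -re_1 -re_i -re_j -re_k !negb_and.
by case/or4P => h; eexists; exact: h.
Qed.

(* Multiply the sandwich identity for [r (Q y) r] on the left by [s], with [y]
   chosen so that [q] does not divide [Re (r Q y)]. *)
Lemma qdvd_mul_cancel s r Q : (q%:Z %| qnorm2 r)%Z -> ~~ qdvd q (qmul r Q) ->
  qdvd q (qmul s (qmul r Q)) -> qdvd q (qmul s r).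
Proof.
move=> q_r nq_rQ q_srQ.
have [y nq_re] := exists_qre_ndvd nq_rQ.
apply: (@qdvd_scale_coprime (2 * q0 (qmul r (qmul Q y)))).
  by rewrite Euclidz_dvdM // negb_or odd_primez_ndvd2 // qmulA.
rewrite -qmul_scaler -qmul_sandwich qmul_addr.
apply: qdvd_add; last by rewrite qmul_scaler; apply: qdvd_scale.
rewrite !qmulA -[qmul (qmul s r) Q]qmulA.
by do 2!apply: qdvd_mulr.
Qed.

Lemma qdvd_qsqr (R : quat) (z c1 c2 c3 : int) : gcdz (gcdz c1 c2) c3 = 1 ->
  q1 R = z * c1 -> q2 R = z * c2 -> q3 R = z * c3 ->
  qdvd q (qmul R R) =
  (q%:Z %| q0 R ^+ 2 - z ^+ 2 * (c1 ^+ 2 + c2 ^+ 2 + c3 ^+ 2))%Z && (q%:Z %| q0 R * z)%Z.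
Proof.
move=> g1 e1 e2 e3.
have -> : qmul R R = Quat (q0 R ^+ 2 - z ^+ 2 * (c1 ^+ 2 + c2 ^+ 2 + c3 ^+ 2))
    (2 * (q0 R * z) * c1) (2 * (q0 R * z) * c2) (2 * (q0 R * z) * c3).
  by rewrite /qmul e1 e2 e3; congr Quat; ring.
rewrite /qdvd /=; congr (_ && _); apply/and3P/idP => [[h1 h2 h3] | h].
  have := dvdz_coprime3 g1 h1 h2 h3.
  by rewrite Euclidz_dvdM // (negbTE (odd_primez_ndvd2 prime_q odd_q)).
by split; rewrite dvdz_mulr // dvdz_mull.
Qed.

End PrimeQuaternions.

(* Taking norms gives [q^(a+m) K = z^2]; if [m > a] this makes [q^(a+1)]
   divide [z], and then [q] divides every component of [R]. *)
Lemma val_le_of_proportional (q : nat) (R V : quat) (a m : nat) (K z : int) :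
  prime q -> ~~ (q%:Z %| K)%Z -> qnorm2 V = q%:Z ^+ a * K -> qnorm2 R = q%:Z ^+ m ->
  ~~ qdvd q R -> z != 0 -> qscale (qnorm2 V) R = qscale z V -> (m <= a)%N.
Proof.
move=> prime_q nK nV nR nqR z_neq0 e.
have qn := primez_neq0 prime_q.
have K_neq0 : K != 0 by apply: contraNneq nK => ->; rewrite dvdz0.
have qaK_neq0 : q%:Z ^+ a * K != 0 by rewrite mulf_neq0 // expf_neq0.
have z2 : q%:Z ^+ (a + m) * K = z ^+ 2.
  apply: (mulfI qaK_neq0).
  have := congr1 qnorm2 e; rewrite !qnorm2_scale nV nR => E.
  by rewrite [RHS]mulrC -E exprD; ring.
have logn_z : (a + m = 2 * logn q `|z|)%N.
  have := congr1 (logn q \o absz) z2; rewrite /= abszM !abszX /= lognX.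
  rewrite lognM ?expn_gt0 ?absz_gt0 ?prime_gt0 // pfactorK // logn_coprime ?addn0 //.
  by rewrite prime_coprime // -dvdzE.
rewrite leqNgt; apply/negP => lt_am; case/negP: nqR.
have /dvdzP[w ew] : (q%:Z ^+ a.+1 %| z)%Z.
  by rewrite dvdzE abszX /= pfactor_dvdn ?absz_gt0 //; lia.
have q_comp (Ri Vi : int) : q%:Z ^+ a * K * Ri = z * Vi -> (q%:Z %| Ri)%Z.
  rewrite ew exprSr => E.
  have /(mulfI (expf_neq0 a qn)) KR : q%:Z ^+ a * (K * Ri) = q%:Z ^+ a * (q%:Z * (w * Vi)).
    by rewrite mulrA E; ring.
  by move: (dvdz_mulr (w * Vi) (dvdzz q%:Z)); rewrite -KR Euclidz_dvdM // (negbTE nK).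
move: e; rewrite nV (quat_eta R) (quat_eta V) /qscale /= => -[e0 e1 e2 e3].
by apply/and4P; split; apply: q_comp; eassumption.
Qed.

(** * Reduced words in the generators of norm q *)

Definition qprod (r : seq quat) : quat := foldr qmul qone r.

Lemma qprod_cat r r' : qprod (r ++ r') = qmul (qprod r) (qprod r').
Proof. by elim: r => [|s r IH] /=; rewrite ?qmul1q // IH qmulA. Qed.

Fixpoint reduced (r : seq quat) : Prop :=
  match r with
  | s :: r' => (if r' is t :: _ then t <> qconj s else True) /\ reduced r'
  | [::] => True
  end.

Lemma not_reduced_split r : ~ reduced r ->
  exists r1 r2 s, r = r1 ++ s :: qconj s :: r2.
Proof.
elim: r => [|s r IH] //=; case/not_and_or; last first.
  by case/IH=> r1 [r2 [t ->]]; exists (s :: r1), r2, t.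
by case: r {IH} => [|t r] // /NNPP ->; exists [::], r, s.
Qed.

Section Generators.
Variables p l q : nat.
Hypotheses (prime_q : prime q) (odd_q : odd q).
Local Notation gen := (in_tildeAB p l q).

Lemma gen_norm s : gen s -> qnorm2 s = q%:Z.
Proof. by case=> _ []. Qed.

Lemma gen_re_gt0 s : gen s -> 0 < q0 s.
Proof. by case=> _ []. Qed.

Lemma gen_conj s : gen s -> gen (qconj s).
Proof.
case=> [[ex par] [re_gt0 n_s]].
by rewrite /in_tildeAB /in_Gtilde qnorm2_conj /zodd !rpredN.
Qed.

Lemma gen_parity s : gen s ->
  [/\ ~~ (2 %| q0 s)%Z, (2 %| q1 s)%Z & (2 %| q2 s - q3 s)%Z].
Proof.
case=> [[_ [par1 par3]] [_ n_s]]; rewrite n_s !modz_nat /zodd in par1 par3.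
have q_mod2 : (q %% 2 = 1)%N by rewrite modn2 odd_q.
have [e | e] : (q %% 4 = 1 \/ q %% 4 = 3)%N by lia.
  by case: par1 => [|h0 h1 h2 h3]; [rewrite e | split; lia].
by case: par3 => [|h1 h0 h2 h3]; [rewrite e | split; lia].
Qed.

Lemma gen_ndvd s : gen s -> ~~ qdvd q s.
Proof.
move=> gs; apply/negP => /(qdvdP _ (primez_neq0 prime_q))[b eb].
have := congr1 qnorm2 eb; rewrite qnorm2_scale (gen_norm gs) expr2 -mulrA.
rewrite -[X in X = _]mulr1 => /(mulfI (primez_neq0 prime_q)) n1.
by move: (primez_ndvd1 prime_q); rewrite n1 dvdz_mulr.
Qed.

(* Unique factorisation modulo [q]: [s t = q Y] forces [Y] to be a unit, and
   the parity and positivity conditions defining [gen] leave only [Y = 1]. *)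
Lemma gen_mul_qdvd s t : gen s -> gen t -> qdvd q (qmul s t) -> t = qconj s.
Proof.
have qn := primez_neq0 prime_q.
move=> gs gt /(qdvdP _ qn)[Y stY].
have nY : qnorm2 Y = 1.
  have := congr1 qnorm2 stY; rewrite qnorm2M qnorm2_scale (gen_norm gs) (gen_norm gt).
  by move=> E; apply/(mulfI qn)/(mulfI qn); rewrite mulrA -expr2 -E mulr1.
have tY : t = qmul (qconj s) Y.
  apply: (qscale_inj qn).
  by rewrite -qmul_scaler -stY qmulA qmul_conjl qmul_constl (gen_norm gs).
have [e e2 hY] := qnorm2_eq1 nY.
have := gen_parity gt; have := gen_parity gs.
have := gen_re_gt0 gt; have := gen_re_gt0 gs.
rewrite tY; move: hY; case: s {gs gt stY tY} => s0 s1 s2 s3.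
have [-> | ->] : e = 1 \/ e = -1 by nia.
all: case=> -> /=; rewrite /qmul /qconj /=.
all: move=> ? ? [? ? ?] [? ? ?]; try (exfalso; lia).
by congr Quat; ring.
Qed.

Lemma qnorm2_qprod r : List.Forall gen r -> qnorm2 (qprod r) = q%:Z ^+ size r.
Proof.
elim=> [|s r' gs _ IH] /=; first by rewrite /qnorm2 /=; ring.
by rewrite qnorm2M IH (gen_norm gs) exprS.
Qed.

Lemma qprod_cancel r1 r2 s : gen s ->
  qprod (r1 ++ s :: qconj s :: r2) = qscale q (qprod (r1 ++ r2)).
Proof.
move=> gs; rewrite !qprod_cat /= [qmul s _]qmulA qmul_conjr qmul_constl (gen_norm gs).
by rewrite qmul_scaler.
Qed.

Lemma not_reduced_qdvd r : List.Forall gen r -> ~ reduced r -> qdvd q (qprod r).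
Proof.
move=> gr /not_reduced_split[r1 [r2 [s er]]]; rewrite er qprod_cancel.
  exact/qdvd_scale/dvdzz.
by move: gr; rewrite er => /List.Forall_app[_ /List.Forall_cons_iff[]].
Qed.

Lemma reduced_qprod_ndvd r : List.Forall gen r -> reduced r -> ~~ qdvd q (qprod r).
Proof.
elim: r => [|s [|t r] IH] /=.
- by move=> _ _; rewrite /qdvd /= (negbTE (primez_ndvd1 prime_q)).
- by move=> /List.Forall_cons_iff[gs _] _; rewrite qmulq1 gen_ndvd.
case/List.Forall_cons_iff => gs gtr [ts rtr]; apply/negP => q_str.
have gt : gen t by case/List.Forall_cons_iff: gtr.
have /(gen_mul_qdvd gs gt) : qdvd q (qmul s t).
  by apply: (qdvd_mul_cancel prime_q odd_q _ (IH gtr rtr) q_str); rewrite (gen_norm gt).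
exact: ts.
Qed.

Lemma reduced_iff_qprod_ndvd r : List.Forall gen r -> reduced r <-> ~~ qdvd q (qprod r).
Proof.
move=> gr; split; first exact: reduced_qprod_ndvd.
by move=> nq; apply: NNPP => /(not_reduced_qdvd gr); apply/negP.
Qed.

Lemma reduce_word t : List.Forall gen t -> exists r j,
  [/\ reduced r, List.Forall gen r, (size r <= size t)%N,
      (~ reduced t -> size r < size t)%N & qprod t = qscale (q%:Z ^+ j) (qprod r)].
Proof.
have [n] := ubnP (size t); elim: n t => // n IH t /ltnSE size_t gt.
have [rt|nrt] := classic (reduced t).
  by exists t, 0%N; split=> //; rewrite expr0 qscale1.
have [r1 [r2 [s et]]] := not_reduced_split nrt.
move: gt size_t; rewrite et => /List.Forall_app[g1 /List.Forall_cons_iff[gs]].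
case/List.Forall_cons_iff=> _ g2; rewrite !size_cat /= => size_t.
have [||r [j [rr gr le_r _ e_r]]] := IH (r1 ++ r2).
- by rewrite size_cat; lia.
- exact/List.Forall_app.
rewrite size_cat in le_r.
exists r, j.+1; rewrite qprod_cancel // e_r qscaleA -exprS; split=> // [|_]; lia.
Qed.

End Generators.

(** * The representation psi *)

Section PsiMatrix.
Variables (F : fieldType) (c d : F).
Hypotheses (char_F : [pchar F] =i pred0) (cd1 : c ^+ 2 + d ^+ 2 + 1 = 0).
Local Notation pm := (psi_mat c d).

Lemma intr_eq0_pchar0 (k : int) : (k%:~R == 0 :> F) = (k == 0).
Proof.
have natr_eq0 := iffLR (pcharf0P F) char_F.
by case: k => n; rewrite ?NegzE ?mulrNz ?oppr_eq0 /= natr_eq0.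
Qed.

Lemma psi_mat_mul x y : pm (qmul x y) = pm x *m pm y.
Proof.
have cdE (u v w : F) : u - v = (c ^+ 2 + d ^+ 2 + 1) * w -> u = v.
  by rewrite cd1 mul0r => /eqP; rewrite subr_eq0 => /eqP.
case: x y => [x0 x1 x2 x3] [y0 y1 y2 y3].
apply/matrixP => i j; rewrite !mxE !big_ord_recl big_ord0 !mxE /=.
rewrite !(rmorphD, rmorphN, rmorphM) /=.
case: i => [[|[|i]] Hi] //; case: j => [[|[|j]] Hj] //=.
- by apply: (cdE _ _ (- (x1%:~R * y1%:~R + x3%:~R * y3%:~R))); ring.
- by apply: (cdE _ _ (x3%:~R * y1%:~R - x1%:~R * y3%:~R)); ring.
- by apply: (cdE _ _ (x1%:~R * y3%:~R - x3%:~R * y1%:~R)); ring.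
- by apply: (cdE _ _ (- (x1%:~R * y1%:~R + x3%:~R * y3%:~R))); ring.
Qed.

Lemma psi_mat_const k : pm (qconst k) = (k%:~R : F)%:M.
Proof.
apply/matrixP => -[[|[|i]] Hi] -[[|[|j]] Hj] //; rewrite !mxE /=.
all: by rewrite ?mul0r ?addr0 ?subr0 ?oppr0 ?add0r ?mulr1n ?mulr0n.
Qed.

Lemma psi_mat_scale k x : pm (qscale k x) = (k%:~R : F) *: pm x.
Proof. by rewrite -qmul_constl psi_mat_mul psi_mat_const mul_scalar_mx. Qed.

Lemma psi_mat_conj x : pm x *m pm (qconj x) = ((qnorm2 x)%:~R : F)%:M.
Proof. by rewrite -psi_mat_mul qmul_conjr psi_mat_const. Qed.

Lemma psi_mat_inv x : qnorm2 x != 0 ->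
  invmx (pm x) = ((qnorm2 x)%:~R : F)^-1 *: pm (qconj x).
Proof.
move=> nx; have nxF : ((qnorm2 x)%:~R : F) != 0 by rewrite intr_eq0_pchar0.
have e : pm x *m (((qnorm2 x)%:~R : F)^-1 *: pm (qconj x)) = 1%:M.
  by rewrite -scalemxAr psi_mat_conj scale_scalar_mx mulVf.
have [u _] := mulmx1_unit e.
by rewrite -[RHS]mul1mx -(mulVmx u) -mulmxA e mulmx1.
Qed.

Lemma psi_mat_scalar z (a : F) : pm z = a%:M -> z = qconst (q0 z) /\ a = (q0 z)%:~R.
Proof.
move/matrixP => E.
have := E ord0 ord0; have := E ord0 ord_max; have := E ord_max ord0.
have := E ord_max ord_max; rewrite !mxE /= ?mulr1n ?mulr0n.
case: z {E} => z0 z1 z2 z3 /=; rewrite /qconst.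
set Z0 := z0%:~R; set Z1 := z1%:~R; set Z2 := z2%:~R; set Z3 := z3%:~R.
move=> e11 e10 e01 e00.
have two_neq0 : (2 : F) != 0 by rewrite (iffLR (pcharf0P F) char_F 2).
have Z2_0 : Z2 = 0.
  apply: (mulfI two_neq0); rewrite mulr0.
  have -> : 2 * Z2 = (- (Z1 * d) + Z2 + Z3 * c) - (- (Z1 * d) - Z2 + Z3 * c) by ring.
  by rewrite e01 e10 subrr.
have Zcd : Z1 * c + Z3 * d = 0.
  apply: (mulfI two_neq0); rewrite mulr0.
  have -> : 2 * (Z1 * c + Z3 * d) = (Z0 + Z1 * c + Z3 * d) - (Z0 - Z1 * c - Z3 * d) by ring.
  by rewrite e00 e11 subrr.
have Zdc : Z1 * d - Z3 * c = 0.
  have -> : Z1 * d - Z3 * c = - (- (Z1 * d) + Z2 + Z3 * c) + Z2 by ring.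
  by rewrite e01 Z2_0 oppr0 addr0.
have Z1_0 : Z1 = 0.
  have -> : Z1 = Z1 * (c ^+ 2 + d ^+ 2 + 1) - c * (Z1 * c + Z3 * d) - d * (Z1 * d - Z3 * c).
    by ring.
  by rewrite cd1 Zcd Zdc !mulr0 !subr0.
have Z3_0 : Z3 = 0.
  have -> : Z3 = Z3 * (c ^+ 2 + d ^+ 2 + 1) - d * (Z1 * c + Z3 * d) + c * (Z1 * d - Z3 * c).
    by ring.
  by rewrite cd1 Zcd Zdc !mulr0 subr0 addr0.
have intr0 (k : int) : k%:~R = 0 :> F -> k = 0.
  by move/eqP; rewrite intr_eq0_pchar0 => /eqP.
split; first by rewrite (intr0 _ Z1_0) (intr0 _ Z2_0) (intr0 _ Z3_0).
by rewrite -e00 Z1_0 Z3_0 !mul0r !addr0.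
Qed.

Lemma psi_mat_proportional x y k : k != 0 -> qnorm2 y != 0 -> pm x = k *: pm y ->
  exists2 z : int, z != 0 & qscale (qnorm2 y) x = qscale z y.
Proof.
move=> k_neq0 ny e.
have := @psi_mat_scalar (qmul x (qconj y)) (k * (qnorm2 y)%:~R).
rewrite psi_mat_mul e -scalemxAl psi_mat_conj scale_scalar_mx => /(_ erefl)[ez kn].
exists (q0 (qmul x (qconj y))).
  by rewrite -intr_eq0_pchar0 -kn mulf_neq0 ?intr_eq0_pchar0.
by rewrite -[RHS]qmul_constl -ez -qmulA qmul_conjl qmul_constr.
Qed.

End PsiMatrix.

Section ProjectiveEquality.
Variables Fp Fl : fieldType.
Implicit Types A B C : Gpair Fp Fl.

Lemma pgl_eq_refl A : pgl_eq A A.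
Proof. by exists 1, 1; rewrite !oner_neq0 !scale1r. Qed.

Lemma pgl_eq_sym A B : pgl_eq A B -> pgl_eq B A.
Proof.
case: A B => [A1 A2] [B1 B2] [kp [kl [kp_neq0 [kl_neq0 /= [-> ->]]]]].
by exists kp^-1, kl^-1; rewrite /= !invr_eq0 !scalerA !mulVf // !scale1r.
Qed.

Lemma pgl_eq_trans A B C : pgl_eq A B -> pgl_eq B C -> pgl_eq A C.
Proof.
case: A B C => [A1 A2] [B1 B2] [C1 C2].
case=> kp [kl [kp_neq0 [kl_neq0 /= [-> ->]]]] [mp [ml [mp_neq0 [ml_neq0 /= [-> ->]]]]].
by exists (mp * kp), (ml * kl); rewrite /= !mulf_neq0 // !scalerA.
Qed.

Lemma pgl_eq_gmul A A' B B' : pgl_eq A A' -> pgl_eq B B' -> pgl_eq (gmul A B) (gmul A' B').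
Proof.
case: A A' B B' => [A1 A2] [A1' A2'] [B1 B2] [B1' B2'].
case=> kp [kl [kp_neq0 [kl_neq0 /= [-> ->]]]] [mp [ml [mp_neq0 [ml_neq0 /= [-> ->]]]]].
exists (kp * mp), (kl * ml).
by rewrite /gmul /= !mulf_neq0 // -!scalemxAl -!scalemxAr !scalerA.
Qed.

End ProjectiveEquality.

Definition letterq (bs : bool * quat) : quat := if bs.1 then bs.2 else qconj bs.2.

Lemma qnorm2_letterq bs : qnorm2 (letterq bs) = qnorm2 bs.2.
Proof. by rewrite /letterq; case: bs.1; rewrite ?qnorm2_conj. Qed.

Section Psi.
Variables (Fp Fl : fieldType) (cp dp : Fp) (cl dl : Fl).
Hypotheses (char_Fp : [pchar Fp] =i pred0) (char_Fl : [pchar Fl] =i pred0).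
Hypotheses (hp : cp ^+ 2 + dp ^+ 2 + 1 = 0) (hl : cl ^+ 2 + dl ^+ 2 + 1 = 0).
Local Notation psi := (psi cp dp cl dl).

Lemma psi_qmul x y : psi (qmul x y) = gmul (psi x) (psi y).
Proof. by rewrite /psi /gmul /= (psi_mat_mul hp) (psi_mat_mul hl). Qed.

Lemma psi_qone : psi qone = gone Fp Fl.
Proof. by rewrite /psi /gone /qone !psi_mat_const. Qed.

Lemma pgl_eq_psi_scale k x : k != 0 -> pgl_eq (psi x) (psi (qscale k x)).
Proof.
move=> k_neq0; exists k%:~R, k%:~R.
by rewrite /= !intr_eq0_pchar0 // (psi_mat_scale hp) (psi_mat_scale hl).
Qed.

Lemma pgl_eq_psi_conj s : qnorm2 s != 0 -> pgl_eq (psi (qconj s)) (ginv (psi s)).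
Proof.
move=> ns; exists ((qnorm2 s)%:~R)^-1, ((qnorm2 s)%:~R)^-1.
by rewrite /= !invr_eq0 !intr_eq0_pchar0 // (psi_mat_inv char_Fp hp) ?(psi_mat_inv char_Fl hl).
Qed.

Lemma psi_proportional x y : pgl_eq (psi y) (psi x) -> qnorm2 y != 0 ->
  exists2 z : int, z != 0 & qscale (qnorm2 y) x = qscale z y.
Proof.
case=> k [_ [k_neq0 [_ [e _]]]] ny.
exact: (psi_mat_proportional char_Fp hp k_neq0 ny e).
Qed.

Lemma word_val_true r : word_val cp dp cl dl (map (pair true) r) = psi (qprod r).
Proof. by elim: r => [|s r IH] /=; rewrite ?psi_qone // psi_qmul IH. Qed.

Lemma pgl_eq_word_val w : (forall bs, List.In bs w -> qnorm2 bs.2 != 0) ->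
  pgl_eq (psi (qprod (map letterq w))) (word_val cp dp cl dl w).
Proof.
elim: w => [|[b s] w IH] /= nw; first by rewrite psi_qone; apply: pgl_eq_refl.
rewrite psi_qmul; apply: pgl_eq_gmul; last by apply: IH => bs wbs; apply: nw; right.
have ns : qnorm2 s != 0 := nw (b, s) (or_introl erefl).
by case: b {nw IH} => /=; [apply: pgl_eq_refl | apply: pgl_eq_psi_conj].
Qed.

End Psi.

(** * Word length *)

Lemma ellE (Fp Fl : fieldType) (cp dp : Fp) (cl dl : Fl) (p l : nat) g k :
  is_word_length cp dp cl dl p l g k -> ell cp dp cl dl p l g = k.
Proof.
move=> gk; rewrite /ell.
case: (epsilon_spec (inhabits 0%N) _ (ex_intro _ k gk)) => [[w [<- [gw wg]]] min_k'].
case: gk => [[w' [<- [gw' wg']]] min_k].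
by apply/eqP; rewrite eqn_leq (min_k' w' gw' wg') (min_k w gw wg).
Qed.

Section WordLength.
Variables (Fp Fl : fieldType) (cp dp : Fp) (cl dl : Fl) (p l : nat).
Hypotheses (char_Fp : [pchar Fp] =i pred0) (char_Fl : [pchar Fl] =i pred0).
Hypotheses (hp : cp ^+ 2 + dp ^+ 2 + 1 = 0) (hl : cl ^+ 2 + dl ^+ 2 + 1 = 0).
Hypotheses (prime_p : prime p) (prime_l : prime l) (odd_p : odd p) (odd_l : odd l).
Hypothesis p_neq_l : p != l.
Variables q q' : nat.
Hypothesis qq' : (q = p /\ q' = l) \/ (q = l /\ q' = p).

Local Notation psi := (psi cp dp cl dl).
Local Notation ell := (ell cp dp cl dl p l).
Local Notation word_val := (word_val cp dp cl dl).
Local Notation gen := (in_tildeAB p l q).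

Let prime_q : prime q. Proof. by case: qq' => -[-> _]. Qed.
Let odd_q : odd q. Proof. by case: qq' => -[-> _]. Qed.
Let prime_q' : prime q'. Proof. by case: qq' => -[_ ->]. Qed.
Let q_neq_q' : q != q'. Proof. by case: qq' => -[-> ->] //; rewrite eq_sym. Qed.

Lemma gen_letterE s : gen_letter p l s <-> gen s \/ in_tildeAB p l q' s.
Proof. by rewrite /gen_letter; case: qq' => -[-> ->]; tauto. Qed.

Lemma word_qnorm2 w : (forall bs, List.In bs w -> gen_letter p l bs.2) ->
  exists a b, (a + b = size w)%N /\
              qnorm2 (qprod (map letterq w)) = q%:Z ^+ a * q'%:Z ^+ b.
Proof.
elim: w => [|bs w IH] /= gw; first by exists 0%N, 0%N; rewrite /qnorm2 /=; split=> //; ring.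
have [|a [b [ab nw]]] := IH; first by move=> bs' w_bs'; apply: gw; right.
rewrite qnorm2M nw qnorm2_letterq.
case/gen_letterE: (gw bs (or_introl erefl)) => /gen_norm ->.
  by exists a.+1, b; split; [lia | rewrite exprS; ring].
by exists a, b.+1; split; [lia | rewrite exprS; ring].
Qed.

(* The product of a shorter word would have too small a [q]-adic valuation. *)
Lemma word_length_ge r w : List.Forall gen r -> reduced r ->
  (forall bs, List.In bs w -> gen_letter p l bs.2) ->
  pgl_eq (word_val w) (psi (qprod r)) -> (size r <= size w)%N.
Proof.
move=> gr rr gw wr.
have nw bs : List.In bs w -> qnorm2 bs.2 != 0.
  by move/gw/gen_letterE => [] /gen_norm ->; rewrite primez_neq0.
have [a [b [ab nV]]] := word_qnorm2 gw.
have [|z z_neq0 ez] := psi_proportional char_Fp hp (pgl_eq_trans (pgl_eq_word_val char_Fp char_Fl hp hl nw) wr).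
  by rewrite nV mulf_neq0 // expf_neq0 // primez_neq0.
have nq'b : ~~ (q%:Z %| q'%:Z ^+ b)%Z.
  case: b {ab nV} => [|b]; first by rewrite expr0 primez_ndvd1.
  by rewrite Euclidz_dvdX // dvdzE /= dvdn_prime2.
have := val_le_of_proportional prime_q nq'b nV (qnorm2_qprod gr)
  (reduced_qprod_ndvd prime_q odd_q gr rr) z_neq0 ez.
lia.
Qed.

Lemma ell_reduced r g : List.Forall gen r -> reduced r ->
  pgl_eq (psi (qprod r)) g -> ell g = size r.
Proof.
move=> gr rr rg; apply: ellE; split=> [|w gw wg].
  exists (map (pair true) r); split; first by rewrite size_map.
  split; last by rewrite (word_val_true hp hl).
  elim: r {rr rg} gr => [|s r IH] //= /List.Forall_cons_iff[gs gr] bs [<- | /(IH gr)] //.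
  by apply/gen_letterE; left.
by apply: (word_length_ge gr rr gw); apply: pgl_eq_trans wg (pgl_eq_sym rg).
Qed.

Lemma ell_word t g : List.Forall gen t -> pgl_eq (psi (qprod t)) g ->
  ell g = size t <-> reduced t.
Proof.
move=> gt tg; split; last by move=> rt; apply: ell_reduced.
have [r [j [rr gr _ lt_rt et]]] := reduce_word prime_q odd_q gt.
have rg : pgl_eq (psi (qprod r)) g.
  apply: pgl_eq_trans tg; rewrite et.
  by apply: (pgl_eq_psi_scale char_Fp char_Fl hp hl); rewrite expf_neq0 // primez_neq0.
by rewrite (ell_reduced gr rr rg) => e; apply: NNPP => /lt_rt; lia.
Qed.

Lemma Gamma_reduced_word g : in_Gamma_q cp dp cl dl p l q g ->
  exists r, [/\ List.Forall gen r, reduced r & pgl_eq (psi (qprod r)) g].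
Proof.
case=> w [gw wg].
have nw bs : List.In bs w -> qnorm2 bs.2 != 0.
  by move/gw/gen_norm ->; rewrite primez_neq0.
have gt : List.Forall gen (map letterq w).
  elim: w {wg nw} gw => [|[b s] w IH] //= gw; constructor.
    have gs := gw (b, s) (or_introl erefl).
    by case: b {gw IH} gs => //= /gen_conj.
  by apply: IH => bs w_bs; apply: gw; right.
have [r [j [rr gr _ _ et]]] := reduce_word prime_q odd_q gt.
exists r; split=> //; apply: pgl_eq_trans (pgl_eq_trans (pgl_eq_word_val char_Fp char_Fl hp hl nw) wg).
by rewrite et; apply: (pgl_eq_psi_scale char_Fp char_Fl hp hl); rewrite expf_neq0 // primez_neq0.
Qed.

Lemma ell_sqr_double_iff x (z0 c1 c2 c3 : int) :
  in_Gamma_q cp dp cl dl p l q (psi x) -> ~ pgl_eq (psi x) (gone Fp Fl) ->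
  gcdz (gcdz c1 c2) c3 = 1 ->
  q1 x = z0 * c1 -> q2 x = z0 * c2 -> q3 x = z0 * c3 ->
  let n := c1 ^+ 2 + c2 ^+ 2 + c3 ^+ 2 in
  let a := psi x in
  (~~ (q%:Z %| n)%Z <-> ell (gmul a a) = (2 * ell a)%N) /\
  (ell (gmul a a) = (2 * ell a)%N <-> legendre (- n) q = 1).
Proof.
move=> /Gamma_reduced_word[r [gr rr ra]] a_neq1 g1 e1 e2 e3 n a.
have size_r_gt0 : (0 < size r)%N.
  by case: r gr rr ra => // _ _; rewrite /= psi_qone => /pgl_eq_sym /a_neq1.
set R := qprod r.
have double : ell (gmul a a) = (2 * ell a)%N <-> ~~ qdvd q (qmul R R).
  have grr : List.Forall gen (r ++ r) by apply/List.Forall_app.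
  have raa : pgl_eq (psi (qprod (r ++ r))) (gmul a a).
    by rewrite qprod_cat (psi_qmul hp hl); apply: pgl_eq_gmul.
  rewrite (ell_reduced gr rr ra) mul2n -addnn -size_cat (ell_word grr raa).
  by rewrite (reduced_iff_qprod_ndvd prime_q odd_q grr) qprod_cat.
have nR : qnorm2 R = q%:Z ^+ size r := qnorm2_qprod gr.
have [|z1 z1_neq0] := psi_proportional char_Fp hp ra.
  by rewrite nR expf_neq0 // primez_neq0.
rewrite -/R /qscale e1 e2 e3 => -[_ f1 f2 f3].
have [zz [R1 R2 R3]] : exists zz, [/\ q1 R = zz * c1, q2 R = zz * c2 & q3 R = zz * c3].
  by apply: (primitive_multiple (w := qnorm2 R * z0) g1 z1_neq0); rewrite -mulrA.
have qN : (q%:Z %| q0 R ^+ 2 + zz ^+ 2 * n)%Z.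
  have -> : q0 R ^+ 2 + zz ^+ 2 * n = qnorm2 R by rewrite /qnorm2 R1 R2 R3 /n; ring.
  by rewrite nR -(prednK size_r_gt0) exprS dvdz_mulr.
have nboth : ~~ ((q%:Z %| q0 R)%Z && (q%:Z %| zz)%Z).
  apply/negP => /andP[qR0 qzz]; case/negP: (reduced_qprod_ndvd prime_q odd_q gr rr).
  by rewrite /qdvd R1 R2 R3 qR0 !dvdz_mulr.
rewrite (qdvd_qsqr prime_q odd_q g1 R1 R2 R3) -(dvdz_sum_sqr prime_q qN nboth) in double.
split; first exact: iff_sym double.
apply: iff_trans double _; rewrite legendre_eq1P // rpredN.
by split=> [nqn | []//]; split=> //; apply: neg_sqr_mod qN nboth.
Qed.

End WordLength.

Unset Implicit Arguments. Set Strict Implicit.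

Theorem lemma3p3
  (Fp Fl : fieldType) (charFp : [pchar Fp] =i pred0) (charFl : [pchar Fl] =i pred0)
  (p l : nat) (prime_p : prime p) (prime_l : prime l)
  (odd_p : odd p) (odd_l : odd l) (pl : p != l)
  (cp dp : Fp) (cl dl : Fl)
  (hp : cp ^+ 2 + dp ^+ 2 + 1 = 0) (hl : cl ^+ 2 + dl ^+ 2 + 1 = 0) :
  (forall (x : quat) (z0 c1 c2 c3 : int),
     in_Gtilde p l x ->
     in_Gamma_q cp dp cl dl p l p (psi cp dp cl dl x) ->
     ~ pgl_eq (psi cp dp cl dl x) (gone Fp Fl) ->
     z0 != 0 -> gcdz (gcdz c1 c2) c3 = 1 ->
     q1 x = z0 * c1 -> q2 x = z0 * c2 -> q3 x = z0 * c3 ->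
     let n := c1 ^+ 2 + c2 ^+ 2 + c3 ^+ 2 in
     let a := psi cp dp cl dl x in
     (~~ (p%:Z %| n)%Z <->
        ell cp dp cl dl p l (gmul a a) = (2 * ell cp dp cl dl p l a)%N) /\
     (ell cp dp cl dl p l (gmul a a) = (2 * ell cp dp cl dl p l a)%N <->
        legendre (- n) p = 1)) /\
  (forall (y : quat) (z0 c1 c2 c3 : int),
     in_Gtilde p l y ->
     in_Gamma_q cp dp cl dl p l l (psi cp dp cl dl y) ->
     ~ pgl_eq (psi cp dp cl dl y) (gone Fp Fl) ->
     z0 != 0 -> gcdz (gcdz c1 c2) c3 = 1 ->
     q1 y = z0 * c1 -> q2 y = z0 * c2 -> q3 y = z0 * c3 ->
     let n := c1 ^+ 2 + c2 ^+ 2 + c3 ^+ 2 in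
     let b := psi cp dp cl dl y in
     (~~ (l%:Z %| n)%Z <->
        ell cp dp cl dl p l (gmul b b) = (2 * ell cp dp cl dl p l b)%N) /\
     (ell cp dp cl dl p l (gmul b b) = (2 * ell cp dp cl dl p l b)%N <->
        legendre (- n) l = 1)).
Proof.
have main := ell_sqr_double_iff charFp charFl hp hl prime_p prime_l odd_p odd_l pl.
split=> x z0 c1 c2 c3 _ x_in_Gamma x_neq1 _.
- exact: (main p l (or_introl (conj erefl erefl)) x z0 c1 c2 c3 x_in_Gamma x_neq1).
- exact: (main l p (or_intror (conj erefl erefl)) x z0 c1 c2 c3 x_in_Gamma x_neq1).
Qed.
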